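(* Let $\varphi\in C^\infty_c(\mathbb R)$ satisfy $$\sum_{k=1}^\infty\frac{\|D^k\varphi\|_{L^2(\mathbb R)}^2}{k^2}<+\infty.$$ Then $\varphi\equiv0$. Consequently, with $N=1$, $\sigma_s$ the normalized surface measure on $\mathbb S^0$, and $\mu^+=\sum_{k=1}^\infty\delta_k/k^2$, for every open set $\Omega\subset\mathbb R$ the space $\mathcal X(\Omega)$ equals $\{0\}$.
   Context: $D^k$ is the $k$-th derivative and $\delta_k$ the Dirac mass at $k$. In the setting of the consequence, for $s=k\in\mathbb N$ the energy $\mathcal E_{2s_1,s}(u,u)$ (with $s_1=k+1$) equals $\|D^ku\|^2_{L^2(\mathbb R)}$, so that for this $\mu^+$, $\mathcal X(\Omega)$ is the closure of $\{u\in C^\infty_c(\Omega):\sum_{k\ge1}\|D^ku\|^2_{L^2}/k^2<\infty\}$ in the norm $(\|u\|^2_{L^2}+\sum_{k\ge1}\|D^ku\|^2_{L^2}/k^2)^{1/2}$. *)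

From HB Require Import structures.
From mathcomp Require Import all_boot all_order all_algebra.
From mathcomp Require Import all_classical all_reals all_analysis.
Set Implicit Arguments. Unset Strict Implicit. Unset Printing Implicit Defensive.
Import Order.TTheory GRing.Theory Num.Theory.
Import numFieldNormedType.Exports.
Local Open Scope classical_set_scope.
Local Open Scope ring_scope.

Section Defs.
Variable R : realType.

Definition Dk (k : nat) (f : R -> R) : R -> R := derive1n k f.

Definition smooth (f : R -> R) : Prop :=
  forall (k : nat) (x : R), derivable (Dk k f) x 1.

Definition supp (f : R -> R) : set R := closure [set x | f x != 0].

(** f in C^infinity_c(Omega) (extended by zero to R) *)
Definition Cc_inf (Omega : set R) (f : R -> R) : Prop :=
  smooth f /\ compact (supp f) /\ supp f `<=` Omega.

Definition L2sq (f : R -> R) : \bar R :=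
  (\int[lebesgue_measure]_(x in [set: R]) ((f x) ^+ 2)%:E)%E.

Definition Dsum (f : R -> R) : \bar R :=
  (\sum_(1 <= k <oo) (L2sq (Dk k f) * ((k%:R ^+ 2)^-1)%:E))%E.

Definition Xnorm2 (f : R -> R) : \bar R := (L2sq f + Dsum f)%E.

Definition X0 (Omega : set R) : set (R -> R) :=
  [set u | Cc_inf Omega u /\ (Dsum u < +oo)%E].

(** X(Omega): closure of X0(Omega) in the X-norm, realised concretely as
    a space of (measurable) functions on R: u belongs to X(Omega) iff it is
    the L^2 limit of a sequence of X0(Omega) which is Cauchy in the X-norm
    (the X-norm dominates the L^2 norm, so the completion embeds in L^2). *)
Definition Xsp (Omega : set R) : set (R -> R) :=
  [set u : R -> R | measurable_fun [set: R] u /\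
    exists v : nat -> R -> R,
      (forall n, X0 Omega (v n)) /\
      (forall e : R, 0 < e -> exists N : nat, forall m n : nat,
          (N <= m)%N -> (N <= n)%N -> (Xnorm2 (fun x => (v m x - v n x)%R) < e%:E)%E) /\
      (L2sq (fun x => (v n x - u x)%R) @[n --> \oo] --> 0%E)].

End Defs.

From HB Require Import structures.
From mathcomp Require Import all_boot all_order all_algebra.
From mathcomp Require Import all_classical all_reals all_analysis.
From mathcomp Require Import measurable_realfun.
From mathcomp Require Import ring lra zify.

Import Order.TTheory GRing.Theory Num.Theory.
Import numFieldNormedType.Exports.
Local Open Scope classical_set_scope.
Local Open Scope ring_scope.

(* Finiteness of Dsum phi bounds ||D^(k+1) phi||_2^2 by B (k+1)^2; integrating
   D^(k+1) phi from the left of the support and using |g| <= 1 + g^2 yields the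
   uniform bound |D^k phi| <= C (k+1)^2.  If all derivatives vanish on
   (-oo, c], n applications of the mean value theorem give
   |D^k phi x| <= C (k+n+1)^2 (x - c)^n, which is at most C (k+1)^2 / (n+1)
   when x - c <= 1/8; letting n grow, all derivatives vanish on (-oo, c + 1/8],
   and finitely many such steps sweep R.  Hence X0(Omega) = {0}, and X(Omega)
   consists of the L^2-limits of 0, i.e. of the null functions. *)

Lemma succn_cube_le_exp8 n : (n.+1 ^ 3 <= 8 ^ n)%N.
Proof.
elim: n => [|n IHn] //.
have step : (n.+2 ^ 3 <= 8 * n.+1 ^ 3)%N by rewrite !expnS expn0; nia.
apply: leq_trans step _.
by rewrite [(8 ^ _)%N]expnS leq_mul2l IHn orbT.
Qed.

Lemma sqr_succ_addn_le k n : ((k + n).+1 ^ 2 * n.+1 <= k.+1 ^ 2 * 8 ^ n)%N.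
Proof.
have sq_le : ((k + n).+1 ^ 2 <= k.+1 ^ 2 * n.+1 ^ 2)%N.
  by rewrite -expnMn leq_exp2r //; nia.
apply: leq_trans (leq_mul sq_le (leqnn n.+1)) _; rewrite -mulnA -expnSr.
by rewrite leq_mul2l succn_cube_le_exp8 orbT.
Qed.

Lemma eq0_nat_mul_bounded {R : archiRealFieldType} (y K : R) :
  0 <= y -> (forall n : nat, y * n.+1%:R <= K) -> y = 0.
Proof.
move=> y_ge0 yK; apply/eqP; rewrite eq_le y_ge0 andbT leNgt; apply/negP => y_gt0.
have := truncnS_gt (K / y); rewrite ltr_pdivrMr // => Ky.
have := yK (Num.Def.trunc (K / y)); nra.
Qed.

Lemma nneseries_term_le {R : realType} {u : (\bar R)^nat} {m k : nat} :
  (forall n, (m <= n)%N -> (0 <= u n)%E) -> (m <= k)%N ->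
  (u k <= \sum_(m <= i <oo) u i)%E.
Proof.
move=> u_ge0 mk.
apply: le_trans (nneseries_lim_ge k.+1 (fun n mn _ => u_ge0 n mn)).
rewrite big_nat_recr //=; apply: leeDr.
rewrite big_nat_cond; apply: sume_ge0 => i /andP[/andP[mi _] _]; exact: u_ge0.
Qed.

Section IteratedDerivatives.
Context {R : realType}.
Implicit Types (f : R -> R) (k : nat).

Lemma DkS f k : Dk k.+1 f = derive1 (Dk k f).
Proof. by rewrite /Dk derive1nS. Qed.

Lemma Dk_cst0 k : Dk k (fun _ : R => 0) = fun _ => 0.
Proof.
elim: k => [|k IHk] //; rewrite DkS IHk.
by apply/funext => x; rewrite derive1E derive_val.
Qed.

Lemma compact_supp_vanish f : compact (supp f) ->
  exists2 M : R, 0 < M & forall x, M < `|x| -> f x = 0.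
Proof.
move=> /compact_bounded [M [_ HM]].
exists (`|M| + 1); first by rewrite ltr_wpDl.
move=> x Mx; apply/eqP/negPn/negP => fx_neq0.
suff : `|x| <= `|M| + 1 by rewrite leNgt Mx.
apply: (HM (`|M| + 1)); first by rewrite (le_lt_trans (ler_norm M)) // ltrDl.
exact: subset_closure.
Qed.

Lemma Dk_vanish_outside f (M : R) : (forall x, M < `|x| -> f x = 0) ->
  forall k x, M < `|x| -> Dk k f x = 0.
Proof.
move=> f0; elim=> [|k IHk] x Mx; first exact: f0.
rewrite DkS derive1E.
have : \forall y \near x, Dk k f y = (fun=> 0) y.
  have : \forall y \near x, M < `|y|.
    apply: (@cvgr_gt R R (nbhs x) _ (fun y : R => `|y|) `|x| _ M Mx).
    exact: norm_continuous.
  by apply: filterS => y /IHk.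
by move/near_eq_derive => ->; rewrite derive_val.
Qed.

Lemma L2sq_ge0 f : (0 <= L2sq f)%E.
Proof. by apply: integral_ge0 => x _; rewrite lee_fin sqr_ge0. Qed.

Lemma L2sq_Dk_le f : (Dsum f < +oo)%E ->
  exists2 B : R, 0 <= B & forall k, (L2sq (Dk k.+1 f) <= (B * k.+1%:R ^+ 2)%:E)%E.
Proof.
move=> Dsum_fin.
have term_ge0 k : (0 <= L2sq (Dk k f) * ((k%:R ^+ 2 : R)^-1)%:E)%E.
  by rewrite mule_ge0 ?L2sq_ge0 // lee_fin invr_ge0 sqr_ge0.
have Dsum_fin_num : Dsum f \is a fin_num.
  by rewrite ge0_fin_numE // nneseries_ge0.
exists (fine (Dsum f)); first by rewrite fine_ge0 // nneseries_ge0.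
move=> k; rewrite EFinM fineK //.
have -> : L2sq (Dk k.+1 f) =
    (L2sq (Dk k.+1 f) * ((k.+1%:R ^+ 2)^-1)%:E * (k.+1%:R ^+ 2)%:E)%E.
  by rewrite -muleA -EFinM mulVf ?mule1.
rewrite lee_wpmul2r ?lee_fin ?sqr_ge0 //.
exact: nneseries_term_le (fun n _ => term_ge0 n) _.
Qed.

Lemma integral_norm_itv_le (g : R -> R) a b : a <= b -> measurable_fun [set: R] g ->
  (\int[lebesgue_measure]_(t in `[a, b]) (`|g t|)%:E <= (b - a)%:E + L2sq g)%E.
Proof.
move=> ab mg.
have mg2 : measurable_fun [set: R] (EFin \o (fun t => g t ^+ 2)).
  by apply/measurable_EFinP; exact: measurable_funX.
apply: (@le_trans _ _ (\int[lebesgue_measure]_(t in `[a, b]) (1 + g t ^+ 2)%:E)%E).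
  apply: ge0_le_integral => //.
  - apply/measurable_EFinP; apply: measurableT_comp => //.
    exact: measurable_funS mg.
  - apply/measurable_EFinP; apply: measurable_funD => //.
    exact: measurable_funS (measurable_funX 2 mg).
  - move=> t _; rewrite lee_fin.
    by case: (lerP 0 (g t)) => [/ger0_norm|/ltr0_norm] ->; nra.
under eq_integral do rewrite EFinD.
rewrite ge0_integralD //; last 2 first.
- by move=> t _; rewrite lee_fin sqr_ge0.
- exact: measurable_funS mg2.
apply: leeD.
  rewrite integral_cst // mul1e.
  have := lebesgue_measure_itv `[a, b]; rewrite /= lte_fin => len_ab.
  rewrite [X in (X <= _)%E](_ : _ = (b - a)%:E) //.
  by rewrite len_ab; case: ltgtP ab => // ->; rewrite subrr.
apply: ge0_subset_integral => //.
by move=> t _; rewrite lee_fin sqr_ge0.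
Qed.

End IteratedDerivatives.

Section SmoothCompactSupport.
Context {R : realType} {phi : R -> R}.
Hypothesis phi_smooth : smooth phi.
Local Notation f k := (Dk k phi).

Lemma continuous_Dk k : continuous (f k).
Proof.
move=> x; apply: differentiable_continuous; apply/derivable1_diffP.
exact: phi_smooth.
Qed.

Lemma is_derive_Dk k (x : R) : is_derive x (1 : R) (f k) (f k.+1 x).
Proof. rewrite DkS derive1E; apply: derivableP; exact: phi_smooth. Qed.

Lemma Dk_sup_le (M B : R) : 0 < M -> 0 <= B ->
  (forall k x, M < `|x| -> f k x = 0) ->
  (forall k, (L2sq (f k.+1) <= (B * k.+1%:R ^+ 2)%:E)%E) ->
  forall k x, `|f k x| <= (2 * (M + 1) + B) * k.+1%:R ^+ 2.
Proof.
move=> M_gt0 B_ge0 f0 fB k x.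
have k_sqr_ge1 : 1 <= k.+1%:R ^+ 2 :> R by rewrite expr_ge1 // ler1n.
suff : `|f k x| <= 2 * (M + 1) + B * k.+1%:R ^+ 2.
  by move/le_trans; apply; rewrite mulrDl; nra.
have [Mx|xM] := ltrP M `|x|.
  by rewrite f0 // normr0; apply: addr_ge0; rewrite ?mulr_ge0 //; lra.
pose a := - (M + 1).
have ax : a < x by move: xM; rewrite ler_norml /a; lra.
have fa0 : f k a = 0 by apply: f0; rewrite /a normrN ger0_norm; lra.
have ftc : (\int[lebesgue_measure]_(t in `[a, x]) (f k.+1 t)%:E = (f k x)%:E)%E.
  rewrite (@continuous_FTC2 _ (f k.+1) (f k)) ?fa0 ?sube0 //.
  - exact: continuous_subspaceT (continuous_Dk k.+1).
  - split; first by move=> y _; exact: phi_smooth.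
    + exact: cvg_at_right_filter (continuous_Dk k a).
    + exact: cvg_at_left_filter (continuous_Dk k x).
have mf : measurable_fun [set: R] (f k.+1).
  exact: continuous_measurable_fun (continuous_Dk k.+1).
rewrite -lee_fin -abse_EFin -ftc.
apply: le_trans (le_abse_integral _ _ _) _ => //.
  by apply/measurable_EFinP; apply: measurable_funS mf.
under eq_integral do rewrite abse_EFin.
apply: le_trans (integral_norm_itv_le (f k.+1) a x (ltW ax) mf) _.
rewrite [X in (_ <= X)%E]EFinD; apply: leeD; last exact: fB.
by rewrite lee_fin; move: xM; rewrite ler_norml /a; lra.
Qed.

Lemma Dk_le_taylor (c C : R) : 0 <= C ->
  (forall k t, t <= c -> f k t = 0) ->
  (forall k t, `|f k t| <= C * k.+1%:R ^+ 2) ->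
  forall n k x, c <= x -> `|f k x| <= C * (k + n).+1%:R ^+ 2 * (x - c) ^+ n.
Proof.
move=> C_ge0 f0 fC; elim=> [|n IHn] k x cx; first by rewrite addn0 expr0 mulr1.
have [cx'|xc] := ltrP c x; last first.
  have -> : x = c by apply/le_anti; rewrite xc cx.
  by rewrite f0 // normr0 subrr expr0n /= mulr0.
have [xi xi_in] := MVT cx' (fun y _ => is_derive_Dk k y)
  (continuous_subspaceT (continuous_Dk k)).
rewrite (f0 k c) // subr0 => ->.
move: xi_in; rewrite in_itv /= => /andP[cxi xix].
have := IHn k.+1 xi (ltW cxi); rewrite addSnnS => IHxi.
have xc_ge0 : 0 <= x - c by rewrite subr_ge0 ltW.
rewrite normrM (ger0_norm xc_ge0) [(x - c) ^+ n.+1]exprSr.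
apply: le_trans (ler_wpM2r xc_ge0 IHxi) _.
rewrite !mulrA; apply: ler_wpM2r => //; apply: ler_wpM2l; first by rewrite !mulr_ge0.
by apply: lerXn2r; rewrite ?nnegrE ?subr_ge0 ?ltW // ltrD2r.
Qed.

Lemma Dk_vanish_shift (c C : R) : 0 <= C ->
  (forall k t, t <= c -> f k t = 0) ->
  (forall k t, `|f k t| <= C * k.+1%:R ^+ 2) ->
  forall k t, t <= c + 8^-1 -> f k t = 0.
Proof.
move=> C_ge0 f0 fC k x x_le.
have [xc|cx] := lerP x c; first exact: f0.
apply/normr0_eq0/(@eq0_nat_mul_bounded _ _ (C * k.+1%:R ^+ 2)) => // n.
have := Dk_le_taylor c C C_ge0 f0 fC n k x (ltW cx).
set d := (x - c) ^+ n => taylor.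
have d_ge0 : 0 <= d by rewrite exprn_ge0 // subr_ge0 ltW.
(* (x - c) <= 1/8 makes 8^n d <= 1, which absorbs the polynomial growth in n *)
have d8 : d * 8%:R ^+ n <= 1.
  rewrite -exprMn exprn_ile1 ?mulr_ge0 ?subr_ge0 //; [exact: ltW | lra].
have growth : (k + n).+1%:R ^+ 2 * n.+1%:R <= k.+1%:R ^+ 2 * 8%:R ^+ n :> R.
  by rewrite -!natrX -!natrM ler_nat sqr_succ_addn_le.
apply: le_trans (ler_wpM2r (ler0n _ _) taylor) _.
have -> : C * (k + n).+1%:R ^+ 2 * d * n.+1%:R =
    C * d * ((k + n).+1%:R ^+ 2 * n.+1%:R) by ring.
apply: le_trans (ler_wpM2l (mulr_ge0 C_ge0 d_ge0) growth) _.
have -> : C * d * (k.+1%:R ^+ 2 * 8%:R ^+ n) =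
    C * k.+1%:R ^+ 2 * (d * 8%:R ^+ n) by ring.
by rewrite ler_piMr // mulr_ge0 // exprn_ge0.
Qed.

Lemma smooth_compact_Dsum_eq0 : compact (supp phi) -> (Dsum phi < +oo)%E ->
  phi = fun _ => 0.
Proof.
move=> phi_cpt Dsum_fin.
have [M M_gt0 phi0] := compact_supp_vanish _ phi_cpt.
have [B B_ge0 fB] := L2sq_Dk_le _ Dsum_fin.
have f0 := Dk_vanish_outside _ _ phi0.
have fC := Dk_sup_le _ _ M_gt0 B_ge0 f0 fB.
have C_ge0 : 0 <= 2 * (M + 1) + B by lra.
pose a := - (M + 1).
have f0_shift m : forall k t, t <= a + m%:R / 8 -> f k t = 0.
  elim: m => [|m IHm] k t.
    by rewrite mul0r addr0 /a => ta; apply: f0; rewrite ltr_normr; lra.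
  rewrite -addn1 natrD mulrDl mul1r addrA.
  exact: Dk_vanish_shift _ _ C_ge0 IHm fC k t.
apply/funext => x; apply: (f0_shift (Num.Def.trunc (8 * (x - a))).+1 0%N).
by have := truncnS_gt (8 * (x - a)); lra.
Qed.

End SmoothCompactSupport.

Section NullFunctions.
Context {R : realType}.

Lemma L2sq_eq0P (u : R -> R) : measurable_fun [set: R] u ->
  L2sq u = 0%E <-> {ae lebesgue_measure, forall x, u x = 0}.
Proof.
move=> mu.
have mu2 : measurable_fun [set: R] (EFin \o (fun x => u x ^+ 2)).
  by apply/measurable_EFinP; exact: measurable_funX.
have := ae_eq_integral_abs lebesgue_measure measurableT mu2.
have -> : (fun x : R => `|(EFin \o (fun y => (u y ^+ 2)%R)) x|%E) =
    fun x => (u x ^+ 2)%:E.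
  by apply/funext => x; rewrite gee0_abs // lee_fin sqr_ge0.
rewrite /L2sq => ->; split.
- apply: (@filterS _ _ (ae_filter_ringOfSetsType lebesgue_measure)) => x.
  by move=> /(_ I) [] /eqP; rewrite sqrf_eq0 => /eqP.
- apply: (@filterS _ _ (ae_filter_ringOfSetsType lebesgue_measure)) => x.
  by move=> ux0 _ /=; rewrite ux0 expr0n.
Qed.

Lemma L2sq_cst0 : L2sq (fun _ : R => 0) = 0%E.
Proof. by rewrite /L2sq expr0n /= integral0. Qed.

Lemma L2sq_sub0 (u : R -> R) : L2sq (fun x => 0 - u x) = L2sq u.
Proof. by rewrite /L2sq; under eq_fun do rewrite sub0r sqrrN. Qed.

Lemma Dsum_cst0 : Dsum (fun _ : R => 0) = 0%E.
Proof. by rewrite /Dsum eseries0 // => k _ _; rewrite Dk_cst0 L2sq_cst0 mul0e. Qed.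

Lemma X0_cst0 (Omega : set R) : X0 Omega (fun _ => 0).
Proof.
have supp0 : supp (fun _ : R => 0) = set0.
  rewrite /supp -closure0; congr closure.
  by apply/seteqP; split => x //=; rewrite eqxx.
split; last by rewrite Dsum_cst0.
split; first by move=> k x; rewrite Dk_cst0; exact: derivable_cst.
by rewrite supp0; split; [exact: compact0 | exact: sub0set].
Qed.

Lemma X0_eq0 (Omega : set R) (v : R -> R) : X0 Omega v -> v = fun _ => 0.
Proof.
move=> [[v_smooth [v_cpt _]] Dsum_fin].
exact: smooth_compact_Dsum_eq0 v_smooth v_cpt Dsum_fin.
Qed.

Lemma XspE (Omega : set R) (u : R -> R) : Xsp Omega u <->
  measurable_fun [set: R] u /\ {ae lebesgue_measure, forall x, u x = 0}.
Proof.
split=> [[mu [v [v_X0 [_ v_to_u]]]]|[mu u0]]; split => //.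
- apply: (proj1 (L2sq_eq0P _ mu)).
  have v_L2 : (fun n => L2sq (fun x => v n x - u x)) = fun=> L2sq u.
    by apply/funext => n; rewrite (X0_eq0 _ _ (v_X0 n)) L2sq_sub0.
  move: v_to_u; rewrite v_L2 => /(cvg_lim (@ereal_hausdorff R)).
  by rewrite lim_cst.
- exists (fun _ _ => 0); split; first by move=> n; exact: X0_cst0.
  split.
    move=> e e_gt0; exists 0%N => m n _ _.
    by rewrite /Xnorm2 subr0 L2sq_cst0 Dsum_cst0 adde0 lte_fin.
  by rewrite L2sq_sub0 (proj2 (L2sq_eq0P _ mu) u0); exact: cvg_cst.
Qed.

End NullFunctions.

Theorem theorem5p3 (R : realType) :
  (forall phi : R -> R, Cc_inf [set: R] phi -> (Dsum phi < +oo)%E ->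
     phi = (fun _ => 0)) /\
  (forall Omega : set R, open Omega ->
     forall u : R -> R, Xsp Omega u <->
       (measurable_fun [set: R] u /\
        {ae (@lebesgue_measure R), forall x, u x = 0})).
Proof.
split=> [phi [phi_smooth [phi_cpt _]] Dsum_fin|Omega _ u]; last exact: XspE.
exact: smooth_compact_Dsum_eq0 phi_smooth phi_cpt Dsum_fin.
Qed.
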